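(* If there exist an orthogonal design of order $4m$ and type $(s_1,\ldots,s_u)$ and two Hadamard matrices of order $4n$ that are quasi-unbiased for parameters $(4n,4n,l,a)$, then there exist two orthogonal designs of order $8mn$ and type $(2ns_1,\ldots,2ns_u)$ that are unbiased with parameter $\alpha=16n^2/a$.
   Context: A Hadamard matrix of order $n$ is an $n\times n$ $(1,-1)$-matrix $H$ with $HH^\top=nI_n$; a weighing matrix of order $n$ and weight $k$ is an $n\times n$ $(0,1,-1)$-matrix $W$ with $WW^\top=kI_n$. Two weighing matrices (in particular Hadamard matrices) $W_1,W_2$ of order $n$ and weight $k$ are quasi-unbiased for parameters $(n,k,l,a)$ if $\frac1{\sqrt a}W_1W_2^\top$ is a weighing matrix of order $n$ and weight $l$. An orthogonal design of order $n$ and type $(s_1,\ldots,s_u)$ in distinct commuting real indeterminates $x_1,\ldots,x_u$ is an $n\times n$ matrix $D$ with entries in $\{0,\pm x_1,\ldots,\pm x_u\}$ with $DD^\top=(s_1x_1^2+\cdots+s_ux_u^2)I_n$. Two orthogonal designs $D_1,D_2$ of the same order and type $(t_1,\ldots,t_u)$ in the same variables are unbiased with parameter $\alpha$ if $\alpha>0$ and there is a $(0,1,-1)$-matrix $V$ with $D_1D_2^\top=\frac{t_1x_1^2+\cdots+t_ux_u^2}{\sqrt\alpha}V$. *)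

From HB Require Import structures.
From mathcomp Require Import all_boot all_order all_algebra.
From mathcomp Require Import reals.
Set Implicit Arguments. Unset Strict Implicit. Unset Printing Implicit Defensive.
Import Order.TTheory GRing.Theory Num.Theory.
Local Open Scope ring_scope.

Definition is01mx (R : numDomainType) (n : nat) (W : 'M[R]_n) : Prop :=
  forall i j, W i j = 0 \/ W i j = 1 \/ W i j = -1.

Definition is_hadamard (R : numDomainType) (n : nat) (H : 'M[R]_n) : Prop :=
  (forall i j, H i j = 1 \/ H i j = -1) /\ H *m H^T = n%:R%:M.

Definition is_weighing (R : numDomainType) (n k : nat) (W : 'M[R]_n) : Prop :=
  is01mx W /\ W *m W^T = k%:R%:M.

Definition quasi_unbiased (R : rcfType) (n k l : nat) (a : R)
  (W1 W2 : 'M[R]_n) : Prop :=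
  [/\ 0 < a, is_weighing k W1, is_weighing k W2 &
      is_weighing l ((Num.sqrt a)^-1 *: (W1 *m W2^T))].

(* Entries of an orthogonal design in u indeterminates x_0..x_{u-1}:
   None = 0, Some (b, i) = (-1)^b x_i. *)
Definition od_entry (u : nat) := option (bool * 'I_u).

Definition eval_entry (R : ringType) (u : nat) (x : 'I_u -> R)
  (e : od_entry u) : R :=
  match e with
  | None => 0
  | Some (b, i) => (-1) ^+ b * x i
  end.

Definition od_eval (R : ringType) (u N : nat) (D : 'M[od_entry u]_N)
  (x : 'I_u -> R) : 'M[R]_N :=
  \matrix_(i, j) eval_entry x (D i j).

Definition od_form (R : ringType) (u : nat) (s : 'I_u -> nat)
  (x : 'I_u -> R) : R :=
  \sum_(i < u) (s i)%:R * x i ^+ 2.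

(* D is an orthogonal design of order N and type s: D D^T = (sum s_i x_i^2) I
   as an identity in the commuting real indeterminates, i.e. for every
   real substitution. *)
Definition is_od (R : realType) (u N : nat) (s : 'I_u -> nat)
  (D : 'M[od_entry u]_N) : Prop :=
  forall x : 'I_u -> R, od_eval D x *m (od_eval D x)^T = (od_form s x)%:M.

Definition od_unbiased (R : realType) (u N : nat) (t : 'I_u -> nat) (alpha : R)
  (D1 D2 : 'M[od_entry u]_N) : Prop :=
  0 < alpha /\
  exists V : 'M[R]_N, is01mx V /\
    forall x : 'I_u -> R,
      od_eval D1 x *m (od_eval D2 x)^T = (od_form t x / Num.sqrt alpha) *: V.

From HB Require Import structures.
From mathcomp Require Import all_boot all_order all_algebra.
From mathcomp Require Import reals mxtens.
From mathcomp Require Import zify ring lra.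
Import Order.TTheory GRing.Theory Num.Theory.
Local Open Scope ring_scope.
Set Implicit Arguments. Unset Strict Implicit. Unset Printing Implicit Defensive.

(* Split the rows of the design D into halves D0, D1 and the columns of a
   Hadamard matrix H into halves H0, H1.  Then P = (H0 + H1)/2 and
   Q = (H0 - H1)/2 are (0,1,-1)-matrices with disjoint supports, so
   D0 (x) P + D1 (x) Q is again a matrix with entries 0, +-x_i.  Orthogonality
   of the rows of D gives D0 D0^T = D1 D1^T = f I and D0 D1^T = 0, where f is
   the quadratic form of D, so the designs built from H and H' have product
   f I (x) (P P'^T + Q Q'^T) = (f/2) I (x) H H'^T.  For H = H' this is
   2 n f I; for a quasi-unbiased pair it is (f sqrt a / 2) times I (x) W with
   W = H H'^T / sqrt a a weighing matrix. *)

Section Tensor.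
Variable R : comNzRingType.

Lemma tensmxDr m n p q (A : 'M[R]_(m, n)) (B C : 'M[R]_(p, q)) :
  A *t (B + C) = A *t B + A *t C.
Proof. by apply/matrixP => i j; rewrite !mxE mulrDr. Qed.

Lemma tensmxZl m n p q c (A : 'M[R]_(m, n)) (B : 'M[R]_(p, q)) :
  (c *: A) *t B = c *: (A *t B).
Proof. by apply/matrixP => i j; rewrite !mxE mulrA. Qed.

Lemma tensmxZr m n p q c (A : 'M[R]_(m, n)) (B : 'M[R]_(p, q)) :
  A *t (c *: B) = c *: (A *t B).
Proof. by apply/matrixP => i j; rewrite !mxE mulrCA. Qed.

Lemma tensmx_scalar m n (a b : R) : a%:M *t b%:M = (a * b)%:M :> 'M_(m * n).
Proof.
apply/matrixP => k k'.
case: (mxtens_indexP k) => i j; case: (mxtens_indexP k') => i' j'.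
rewrite tensmxE !mxE (can_eq (@mxtens_indexK _ _)) xpair_eqE.
by case: (i == i'); case: (j == j'); rewrite ?mulr1n ?mulr0n ?mulr0 ?mul0r.
Qed.

End Tensor.

Lemma castmxZ (R : pzRingType) m n m' n' (e : (m = m') * (n = n')) c (A : 'M[R]_(m, n)) :
  castmx e (c *: A) = c *: castmx e A.
Proof. by apply/matrixP => i j; rewrite !(castmxE, mxE). Qed.

Lemma castmx_scalar (R : pzRingType) p p' (e : p = p') (c : R) :
  castmx (e, e) c%:M = c%:M.
Proof. by case: p' / e; rewrite castmx_id. Qed.

Lemma mul_castmx_tr (R : pzRingType) p p' q q' (ep : p = p') (eq_q : q = q')
    (A B : 'M[R]_(p, q)) :
  castmx (ep, eq_q) A *m (castmx (ep, eq_q) B)^T = castmx (ep, ep) (A *m B^T).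
Proof. by case: p' / ep; case: q' / eq_q; rewrite !castmx_id. Qed.

Lemma gram_vsubmx (R : pzRingType) p1 p2 q (D : 'M[R]_(p1 + p2, q)) f :
  D *m D^T = f%:M ->
  [/\ usubmx D *m (usubmx D)^T = f%:M, usubmx D *m (dsubmx D)^T = 0,
      dsubmx D *m (usubmx D)^T = 0 & dsubmx D *m (dsubmx D)^T = f%:M].
Proof.
move=> gD; apply: eq_block_mx.
by rewrite -mul_col_row -tr_col_mx vsubmxK gD scalar_mx_block.
Qed.

Section SplitTensor.
Variable R : numFieldType.
Implicit Types (p q r t : nat).

Definition half_sum r t (H : 'M[R]_(r, t + t)) := 2^-1 *: (lsubmx H + rsubmx H).
Definition half_diff r t (H : 'M[R]_(r, t + t)) := 2^-1 *: (lsubmx H - rsubmx H).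

Lemma half_sum_diff_gram r t (H H' : 'M[R]_(r, t + t)) :
  half_sum H *m (half_sum H')^T + half_diff H *m (half_diff H')^T
    = 2^-1 *: (H *m H'^T).
Proof.
rewrite -[H in RHS]hsubmxK -[H' in RHS]hsubmxK tr_row_mx mul_row_col.
apply/matrixP => i j; rewrite !mxE mulrDr !mulr_sumr -!big_split /=.
by apply: eq_bigr => k _; rewrite !mxE; field.
Qed.

Definition split_tensmx p q r t (A : 'M[R]_(p + p, q)) (H : 'M[R]_(r, t + t))
  : 'M[R]_(p * r, q * t) :=
  usubmx A *t half_sum H + dsubmx A *t half_diff H.

Lemma split_tensmx_gram p q r t (A : 'M[R]_(p + p, q)) (H H' : 'M[R]_(r, t + t)) f :
  A *m A^T = f%:M ->
  split_tensmx A H *m (split_tensmx A H')^T = f%:M *t (2^-1 *: (H *m H'^T)).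
Proof.
case/gram_vsubmx => g00 g01 g10 g11.
rewrite /split_tensmx linearD /= !trmx_tens mulmxDl !mulmxDr !tensmx_mul.
by rewrite g00 g01 g10 g11 !tens0mx addr0 add0r -tensmxDr half_sum_diff_gram.
Qed.

End SplitTensor.

Definition is_sign_mx (R : numDomainType) m n (H : 'M[R]_(m, n)) : Prop :=
  forall i j, H i j = 1 \/ H i j = -1.

Section OrthogonalDesignSplit.
Variables (R : realFieldType) (u : nat).
Implicit Types (e : od_entry u) (x : 'I_u -> R).

Definition od_opp e : od_entry u :=
  if e is Some (b, i) then Some (~~ b, i) else None.

Lemma eval_od_opp x e : eval_entry x (od_opp e) = - eval_entry x e.
Proof. by case: e => [[b i]|] /=; rewrite ?signrN ?mulNr ?oppr0. Qed.

Definition od_select (h0 h1 : R) e0 e1 : od_entry u :=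
  let e := if h0 == h1 then e0 else e1 in if h0 < 0 then od_opp e else e.

Lemma eval_od_select x (h0 h1 : R) e0 e1 :
  h0 = 1 \/ h0 = -1 -> h1 = 1 \/ h1 = -1 ->
  eval_entry x (od_select h0 h1 e0 e1)
    = eval_entry x e0 * (2^-1 * (h0 + h1)) + eval_entry x e1 * (2^-1 * (h0 - h1)).
Proof.
have ne : (1 : R) != -1 by apply/eqP => h; lra.
rewrite /od_select => -[]-> []->; rewrite ?eqxx ?(negbTE ne) 1?eq_sym ?(negbTE ne)
  ?ltr10 ?ltrN10 ?eval_od_opp /=; by field.
Qed.

Definition od_split_tens p q r t (D : 'M[od_entry u]_(p + p, q))
    (H : 'M[R]_(r, t + t)) : 'M[od_entry u]_(p * r, q * t) :=
  \matrix_(k, k') od_select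
    (lsubmx H (mxtens_unindex k).2 (mxtens_unindex k').2)
    (rsubmx H (mxtens_unindex k).2 (mxtens_unindex k').2)
    (usubmx D (mxtens_unindex k).1 (mxtens_unindex k').1)
    (dsubmx D (mxtens_unindex k).1 (mxtens_unindex k').1).

Lemma od_evalE N (D : 'M[od_entry u]_N) x : od_eval D x = map_mx (eval_entry x) D.
Proof. by apply/matrixP => i j; rewrite !mxE. Qed.

Lemma map_od_split_tens p q r t (D : 'M[od_entry u]_(p + p, q))
    (H : 'M[R]_(r, t + t)) x :
  is_sign_mx H ->
  map_mx (eval_entry x) (od_split_tens D H)
    = split_tensmx (map_mx (eval_entry x) D) H.
Proof.
by move=> sH; apply/matrixP => k k'; rewrite !mxE eval_od_select ?mxE.
Qed.

End OrthogonalDesignSplit.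

Lemma is_sign_castmx (R : numDomainType) m n m' n' (e : (m = m') * (n = n'))
    (H : 'M[R]_(m, n)) :
  is_sign_mx H -> is_sign_mx (castmx e H).
Proof. by move=> sH i j; rewrite castmxE. Qed.

Lemma is01mx_castmx (R : numDomainType) m m' (e : m = m') (W : 'M[R]_m) :
  is01mx W -> is01mx (castmx (e, e) W).
Proof. by move=> hW i j; rewrite castmxE. Qed.

Lemma is01mx_tens (R : numDomainType) m p (A : 'M[R]_m) (B : 'M[R]_p) :
  is01mx A -> is01mx B -> is01mx (A *t B).
Proof.
move=> hA hB k k'; rewrite mxE.
case: (hA (mxtens_unindex k).1 (mxtens_unindex k').1) => [|[]]->;
by case: (hB (mxtens_unindex k).2 (mxtens_unindex k').2) => [|[]]->;
  rewrite ?mul0r ?mulr0 ?mul1r ?mulN1r ?opprK; auto.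
Qed.

Lemma is01mx1 (R : numDomainType) n : is01mx (1%:M : 'M[R]_n).
Proof. by move=> i j; rewrite mxE; case: (i == j); auto. Qed.

Lemma od_form_scale (R : nzRingType) u k (s : 'I_u -> nat) (x : 'I_u -> R) :
  od_form (fun i => (k * s i)%N) x = k%:R * od_form s x.
Proof. by rewrite /od_form mulr_sumr; apply: eq_bigr => i _; rewrite natrM mulrA. Qed.

Lemma sqrtr_sqr_div (R : rcfType) (c a : R) :
  0 <= a -> Num.sqrt (c ^+ 2 / a) = `|c| / Num.sqrt a.
Proof. by move=> a0; rewrite sqrtrM ?sqr_ge0 // sqrtr_sqr sqrtrV. Qed.

Lemma quad_halves k : (4 * k = 2 * k + 2 * k)%N. Proof. by lia. Qed.

Section OrthogonalDesignTensor.
Variables (R : realType) (u m n : nat).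

Lemma order_rows : (2 * m * (4 * n) = 8 * m * n)%N. Proof. by lia. Qed.
Lemma order_cols : (4 * m * (2 * n) = 8 * m * n)%N. Proof. by lia. Qed.

Definition od_hadamard_tens (D : 'M[od_entry u]_(4 * m)) (H : 'M[R]_(4 * n))
  : 'M[od_entry u]_(8 * m * n) :=
  castmx (order_rows, order_cols)
    (od_split_tens (castmx (quad_halves m, erefl) D) (castmx (erefl, quad_halves n) H)).

Lemma od_hadamard_tens_gram s (D : 'M[od_entry u]_(4 * m)) (H H' : 'M[R]_(4 * n)) x :
  is_od R s D -> is_sign_mx H -> is_sign_mx H' ->
  od_eval (od_hadamard_tens D H) x *m (od_eval (od_hadamard_tens D H') x)^T
    = castmx (order_rows, order_rows) ((od_form s x)%:M *t (2^-1 *: (H *m H'^T))).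
Proof.
move=> hD sH sH'.
have gD : map_mx (eval_entry x) (castmx (quad_halves m, erefl) D) *m
    (map_mx (eval_entry x) (castmx (quad_halves m, erefl) D))^T = (od_form s x)%:M.
  by rewrite map_castmx mul_castmx_tr -od_evalE hD castmx_scalar.
rewrite !od_evalE !map_castmx !map_od_split_tens; try exact: is_sign_castmx.
by rewrite mul_castmx_tr (split_tensmx_gram _ _ gD) mul_castmx_tr castmx_id.
Qed.

Lemma is_od_hadamard_tens s (D : 'M[od_entry u]_(4 * m)) (H : 'M[R]_(4 * n)) :
  is_od R s D -> is_hadamard H -> is_od R (fun i => 2 * n * s i)%N (od_hadamard_tens D H).
Proof.
move=> hD [sH gH] x; rewrite (od_hadamard_tens_gram _ hD) // gH scale_scalar_mx.
rewrite tensmx_scalar castmx_scalar od_form_scale !natrM; congr _%:M; by field.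
Qed.

Lemma od_unbiased_hadamard_tens s l (a : R) (D : 'M[od_entry u]_(4 * m))
    (H1 H2 : 'M[R]_(4 * n)) :
  (0 < n)%N -> is_od R s D -> is_hadamard H1 -> is_hadamard H2 ->
  quasi_unbiased (4 * n) l a H1 H2 ->
  od_unbiased (fun i => 2 * n * s i)%N (16 * (n ^ 2)%N%:R / a)
    (od_hadamard_tens D H1) (od_hadamard_tens D H2).
Proof.
move=> n0 hD [sH1 _] [sH2 _] [a0 _ _ [W01 _]].
have nR0 : (n%:R : R) != 0 by rewrite pnatr_eq0 -lt0n.
have sa0 : Num.sqrt a != 0 by rewrite gt_eqF // sqrtr_gt0.
have -> : 16 * (n ^ 2)%N%:R = (4 * n%:R) ^+ 2 :> R by rewrite natrX; ring.
split; first by rewrite divr_gt0 // exprn_gt0 // mulr_gt0 // ltr0n.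
exists (castmx (order_rows, order_rows) (1%:M *t ((Num.sqrt a)^-1 *: (H1 *m H2^T)))).
split; first by apply/is01mx_castmx/is01mx_tens => //; exact: is01mx1.
move=> x; rewrite (od_hadamard_tens_gram _ hD) // -castmxZ; congr castmx.
rewrite -[(od_form s x)%:M]scalemx1 tensmxZl !tensmxZr !scalerA; congr (_ *: _).
rewrite sqrtr_sqr_div ?ltW // ger0_norm ?mulr_ge0 ?ler0n // od_form_scale natrM.
by field; rewrite sa0 nR0.
Qed.

End OrthogonalDesignTensor.

Theorem proposition3p12 (R : realType) (m n u : nat) (s : 'I_u -> nat)
  (l : nat) (a : R) :
  (0 < m)%N -> (0 < n)%N ->
  (exists D : 'M[od_entry u]_(4 * m), is_od R s D) ->
  (exists H1 H2 : 'M[R]_(4 * n),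
      [/\ is_hadamard H1, is_hadamard H2 & quasi_unbiased (4 * n) l a H1 H2]) ->
  exists D1 D2 : 'M[od_entry u]_(8 * m * n),
    [/\ is_od R (fun i => 2 * n * s i)%N D1,
        is_od R (fun i => 2 * n * s i)%N D2 &
        od_unbiased (fun i => 2 * n * s i)%N (16 * (n ^ 2)%N%:R / a) D1 D2].
Proof.
move=> _ n0 [D hD] [H1 [H2 [hH1 hH2 qu]]].
exists (od_hadamard_tens D H1), (od_hadamard_tens D H2).
by split; [exact: is_od_hadamard_tens .. | exact: od_unbiased_hadamard_tens qu].
Qed.
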